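(* On the group $G_{\mathtt{ALD}}$ define binary operations $g*h:=g\cdot\mathrm{sh}_1(h)\cdot S_\varepsilon\cdot\mathrm{sh}_1(g)^{-1}$ and $g\circ h:=g\cdot\mathrm{sh}_1(h)\cdot A_\varepsilon$. Then for all $g,h,k\in G_{\mathtt{ALD}}$ and $\square\in\{*,\circ\}$: $(g*h)\,\square\,(g*k)=(g*(h\,\square\,k))\cdot S_0$; $(g\circ h)*k=(g*(h*k))\cdot A_0$; $(g\cdot\mathrm{sh}_0(k))\,\square\,h=(g\,\square\,h)\cdot\mathrm{sh}_{00}(k)$; $g\,\square\,(h\cdot\mathrm{sh}_0(k))=(g\,\square\,h)\cdot\mathrm{sh}_{01}(k)$.
   Context: Addresses are finite sequences over $\{0,1\}$, $\varepsilon$ empty, concatenation by juxtaposition; two addresses are incomparable if neither is a prefix of the other. $G_{\mathtt{ALD}}$ is the group generated by elements $S_\alpha,A_\alpha$ ($\alpha\in\{0,1\}^*$) subject to the following relations, where $X,Y$ each stand for $S$ or $A$ and $\alpha,\beta,\delta$ are arbitrary addresses ($\delta$ possibly empty): $X_\alpha Y_\beta=Y_\beta X_\alpha$ for $\alpha,\beta$ incomparable; $X_{\alpha0\delta}S_\alpha=S_\alpha X_{\alpha00\delta}X_{\alpha10\delta}$; $X_{\alpha10\delta}S_\alpha=S_\alpha X_{\alpha01\delta}$; $X_{\alpha11\delta}S_\alpha=S_\alpha X_{\alpha11\delta}$; $X_{\alpha0\delta}A_\alpha=A_\alpha X_{\alpha00\delta}$; $X_{\alpha10\delta}A_\alpha=A_\alpha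 X_{\alpha01\delta}$; $X_{\alpha11\delta}A_\alpha=A_\alpha X_{\alpha1\delta}$; $S_\alpha S_{\alpha1}S_\alpha=S_{\alpha1}S_\alpha S_{\alpha1}S_{\alpha0}$; $S_\alpha S_{\alpha1}A_\alpha=A_{\alpha1}S_\alpha S_{\alpha0}$; $A_\alpha S_\alpha=S_{\alpha1}S_\alpha A_{\alpha1}A_{\alpha0}$. For an address $\beta$, $\mathrm{sh}_\beta$ is the endomorphism of $G_{\mathtt{ALD}}$ with $S_\alpha\mapsto S_{\beta\alpha}$, $A_\alpha\mapsto A_{\beta\alpha}$. *)

(* The group G_ALD is presented as words in the
   generators S_alpha, A_alpha and their inverses, modulo the congruence
   generated by free cancellation and the defining relations.  Equality in
   G_ALD is [weq]. *)
From mathcomp Require Import all_boot.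

Set Implicit Arguments.
Unset Strict Implicit.
Unset Printing Implicit Defensive.

Inductive gen := GS | GA.

Definition address := seq bool.

(* a letter: generator kind, address, exponent sign (true = +1, false = -1) *)
Definition letter := (gen * address * bool)%type.
Definition word := seq letter.

Definition linv (x : letter) : letter := let: (g, a, s) := x in (g, a, ~~ s).

Definition wmul (u v : word) : word := u ++ v.
Definition winv (w : word) : word := rev (map linv w).
Definition wone : word := [::].

Definition X (g : gen) (a : address) : word := [:: (g, a, true)].
Definition S (a : address) : word := X GS a.
Definition A (a : address) : word := X GA a.

Definition incomparable (a b : address) : bool := ~~ prefix a b && ~~ prefix b a.

Definition sh (b : address) (w : word) : word :=
  map (fun x : letter => let: (g, a, s) := x in (g, b ++ a, s)) w.

Inductive ald_rel : word -> word -> Prop :=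
| R_comm (x y : gen) (a b : address) :
    incomparable a b -> ald_rel (X x a ++ X y b) (X y b ++ X x a)
| R_S0 (x : gen) (a d : address) :
    ald_rel (X x (a ++ false :: d) ++ S a)
            (S a ++ X x (a ++ false :: false :: d) ++ X x (a ++ true :: false :: d))
| R_S10 (x : gen) (a d : address) :
    ald_rel (X x (a ++ true :: false :: d) ++ S a) (S a ++ X x (a ++ false :: true :: d))
| R_S11 (x : gen) (a d : address) :
    ald_rel (X x (a ++ true :: true :: d) ++ S a) (S a ++ X x (a ++ true :: true :: d))
| R_A0 (x : gen) (a d : address) :
    ald_rel (X x (a ++ false :: d) ++ A a) (A a ++ X x (a ++ false :: false :: d))
| R_A10 (x : gen) (a d : address) :
    ald_rel (X x (a ++ true :: false :: d) ++ A a) (A a ++ X x (a ++ false :: true :: d))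
| R_A11 (x : gen) (a d : address) :
    ald_rel (X x (a ++ true :: true :: d) ++ A a) (A a ++ X x (a ++ true :: d))
| R_SSS (a : address) :
    ald_rel (S a ++ S (rcons a true) ++ S a)
            (S (rcons a true) ++ S a ++ S (rcons a true) ++ S (rcons a false))
| R_SSA (a : address) :
    ald_rel (S a ++ S (rcons a true) ++ A a)
            (A (rcons a true) ++ S a ++ S (rcons a false))
| R_AS (a : address) :
    ald_rel (A a ++ S a)
            (S (rcons a true) ++ S a ++ A (rcons a true) ++ A (rcons a false)).

Inductive weq : word -> word -> Prop :=
| weq_refl u : weq u u
| weq_sym u v : weq u v -> weq v u
| weq_trans u v w : weq u v -> weq v w -> weq u w
| weq_cat u u' v v' : weq u u' -> weq v v' -> weq (u ++ v) (u' ++ v')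
| weq_cancel (x : letter) : weq [:: x; linv x] [::]
| weq_rel u v : ald_rel u v -> weq u v.

Definition star (g h : word) : word :=
  g ++ sh [:: true] h ++ S [::] ++ winv (sh [:: true] g).
Definition circ (g h : word) : word :=
  g ++ sh [:: true] h ++ A [::].

(* The relations with a parameter δ say that conjugation by S_ε and A_ε moves
   every generator living under 0, 10 or 11 to a prescribed new address.
   Lifted to words, a whole shifted word sh_β(w) passes S_ε or A_ε at the
   price of a change of shift (and, for sh_0 past S_ε, a doubling into
   sh_00(w) sh_10(w)); words shifted by incomparable addresses commute.
   Unfolding * and ∘, these moves bring both sides of each identity to a
   form where they differ only by one of the three relations SSS, SSA, AS
   at the root. *)
From mathcomp Require Import all_boot.
From Stdlib Require Import Setoid Morphisms.

Set Implicit Arguments.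
Unset Strict Implicit.
Unset Printing Implicit Defensive.

#[export] Instance weq_Equivalence : Equivalence weq.
Proof. split; [exact: weq_refl | exact: weq_sym | exact: weq_trans]. Qed.

#[export] Instance cat_weq_Proper : Proper (weq ==> weq ==> weq) (@cat letter).
Proof. by move=> ? ? Hu ? ? Hv; apply: weq_cat. Qed.

Lemma linvK : involutive linv.
Proof. by case=> [[g a] s]; rewrite /= negbK. Qed.

Lemma winv_cat u v : winv (u ++ v) = winv v ++ winv u.
Proof. by rewrite /winv map_cat rev_cat. Qed.

Lemma winvK : involutive winv.
Proof. by move=> w; rewrite /winv map_rev revK -map_comp (eq_map linvK) map_id. Qed.

Lemma sh_cat b u v : sh b (u ++ v) = sh b u ++ sh b v.
Proof. exact: map_cat. Qed.

Lemma winv_sh b w : winv (sh b w) = sh b (winv w).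
Proof. by rewrite /winv /sh map_rev -!map_comp; congr rev; apply: eq_map => -[[g a] s]. Qed.

Lemma sh1_sh x c w : sh [:: x] (sh c w) = sh (x :: c) w.
Proof. by rewrite /sh -map_comp; apply: eq_map => -[[g a] s]. Qed.

Lemma S_sh b : S b = sh b (S [::]).
Proof. by rewrite /sh /= cats0. Qed.

Lemma A_sh b : A b = sh b (A [::]).
Proof. by rewrite /sh /= cats0. Qed.

Lemma incomparable_cat b c a a' :
  incomparable b c -> incomparable (b ++ a) (c ++ a').
Proof.
elim: b c => [|x b IHb] [|y c] //; rewrite /incomparable /= eq_sym.
by case: eqP => //= _; apply: IHb.
Qed.

Lemma weq_cat_winv w r : weq (w ++ winv w ++ r) r.
Proof.
elim: w r => [|x w IHw] r; first reflexivity.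
rewrite -cat1s winv_cat -!catA IHw.
exact: (weq_cat (weq_cancel x) (weq_refl r)).
Qed.

Lemma weq_winv_cat w r : weq (winv w ++ w ++ r) r.
Proof. by have := weq_cat_winv (winv w) r; rewrite winvK. Qed.

Lemma weq_sh_winv b w r : weq (sh b w ++ sh b (winv w) ++ r) r.
Proof. by rewrite -winv_sh; apply: weq_cat_winv. Qed.

Lemma weq_winv_sh b w r : weq (sh b (winv w) ++ sh b w ++ r) r.
Proof. by rewrite -winv_sh; apply: weq_winv_cat. Qed.

Lemma weq_conj_linv x c p :
  weq ([:: x] ++ c) (c ++ p) -> weq ([:: linv x] ++ c) (c ++ winv p).
Proof.
move=> Hx; transitivity ([:: linv x] ++ (c ++ p) ++ winv p).
  rewrite -catA -[winv p]cats0 weq_cat_winv cats0; reflexivity.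
rewrite -Hx -catA.
by have := weq_cat (weq_cancel (linv x)) (weq_refl (c ++ winv p)); rewrite linvK.
Qed.

Lemma weq_comm_letter p q x y s t : incomparable p q ->
  weq ([:: (x, p, s)] ++ [:: (y, q, t)]) ([:: (y, q, t)] ++ [:: (x, p, s)]).
Proof.
move=> Hpq; have R := weq_rel (R_comm x y Hpq).
have comm_true s' :
    weq ([:: (x, p, s')] ++ [:: (y, q, true)]) ([:: (y, q, true)] ++ [:: (x, p, s')]).
  by case: s'; [exact: R | exact: weq_conj_linv R].
case: t; first exact: comm_true.
symmetry; apply: (@weq_conj_linv (y, q, true) _ [:: (y, q, true)]).
by symmetry; apply: comm_true.
Qed.

Lemma weq_sh_comm b c u v : incomparable b c ->
  weq (sh b u ++ sh c v) (sh c v ++ sh b u).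
Proof.
move=> Hbc.
have letter_comm x a s : weq ([:: (x, b ++ a, s)] ++ sh c v) (sh c v ++ [:: (x, b ++ a, s)]).
  elim: v => [|[[y a'] t] v IHv]; first reflexivity.
  rewrite [sh c _]/= -[_ :: sh c v]cat1s catA.
  rewrite (weq_comm_letter x y s t (incomparable_cat a a' Hbc)).
  rewrite -!catA IHv; reflexivity.
elim: u => [|[[x a] s] u IHu]; first by rewrite /= cats0; reflexivity.
rewrite [sh b _]/= -[_ :: sh b u]cat1s -catA IHu catA letter_comm -catA; reflexivity.
Qed.

Lemma weq_sh_commr b c u v r : incomparable b c ->
  weq (sh b u ++ sh c v ++ r) (sh c v ++ sh b u ++ r).
Proof. by move=> Hbc; rewrite !catA (weq_sh_comm u v Hbc); reflexivity. Qed.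

Lemma weq_sh_pass b b' c :
  (forall x a, weq ([:: (x, b ++ a, true)] ++ c) (c ++ [:: (x, b' ++ a, true)])) ->
  forall w r, weq (sh b w ++ c ++ r) (c ++ sh b' w ++ r).
Proof.
move=> Hpos.
have Hletter x a s : weq ([:: (x, b ++ a, s)] ++ c) (c ++ [:: (x, b' ++ a, s)]).
  by case: s; [exact: Hpos | exact: weq_conj_linv (Hpos x a)].
elim=> [|[[x a] s] w IHw] r; first reflexivity.
rewrite /= -(cat1s (x, b ++ a, s)) -(cat1s (x, b' ++ a, s)).
rewrite IHw catA Hletter -catA; reflexivity.
Qed.

Lemma weq_sh10_S w r :
  weq (sh [:: true; false] w ++ S [::] ++ r) (S [::] ++ sh [:: false; true] w ++ r).
Proof. apply: weq_sh_pass => x a; exact: weq_rel (R_S10 x [::] a). Qed.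

Lemma weq_sh11_S w r :
  weq (sh [:: true; true] w ++ S [::] ++ r) (S [::] ++ sh [:: true; true] w ++ r).
Proof. apply: weq_sh_pass => x a; exact: weq_rel (R_S11 x [::] a). Qed.

Lemma weq_sh0_A w r :
  weq (sh [:: false] w ++ A [::] ++ r) (A [::] ++ sh [:: false; false] w ++ r).
Proof. apply: weq_sh_pass => x a; exact: weq_rel (R_A0 x [::] a). Qed.

Lemma weq_sh10_A w r :
  weq (sh [:: true; false] w ++ A [::] ++ r) (A [::] ++ sh [:: false; true] w ++ r).
Proof. apply: weq_sh_pass => x a; exact: weq_rel (R_A10 x [::] a). Qed.

Lemma weq_sh11_A w r :
  weq (sh [:: true; true] w ++ A [::] ++ r) (A [::] ++ sh [:: true] w ++ r).
Proof. apply: weq_sh_pass => x a; exact: weq_rel (R_A11 x [::] a). Qed.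

Lemma weq_sh0_S w r :
  weq (sh [:: false] w ++ S [::] ++ r)
      (S [::] ++ sh [:: false; false] w ++ sh [:: true; false] w ++ r).
Proof.
have letter_pass x a s : weq (sh [:: false] [:: (x, a, s)] ++ S [::])
    (S [::] ++ sh [:: false; false] [:: (x, a, s)] ++ sh [:: true; false] [:: (x, a, s)]).
  have R := weq_rel (R_S0 x [::] a).
  case: s; first exact: R.
  (* inverting the right-hand side swaps the two images, which commute *)
  apply: weq_trans (weq_conj_linv R) _; apply: weq_cat (weq_refl _) _.
  exact: weq_comm_letter.
elim: w r => [|[[x a] s] w IHw] r; first reflexivity.
rewrite -(cat1s (x, a, s)) !sh_cat -!catA IHw catA letter_pass -!catA.
by rewrite (weq_sh_commr [:: (x, a, s)] w) //; reflexivity.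
Qed.

Lemma weq_SSS r :
  weq (S [::] ++ sh [:: true] (S [::]) ++ S [::] ++ sh [:: true] (winv (S [::])) ++ r)
      (sh [:: true] (S [::]) ++ S [::] ++ sh [:: false] (S [::]) ++ r).
Proof.
have R : weq (S [::] ++ sh [:: true] (S [::]) ++ S [::])
    (sh [:: true] (S [::]) ++ S [::] ++ sh [:: true] (S [::]) ++ sh [:: false] (S [::])).
  exact: weq_rel (R_SSS [::]).
rewrite 2!catA -[_ ++ S [::]]catA R -!catA (weq_sh_commr (S [::]) (S [::])) //.
by rewrite weq_sh_winv; reflexivity.
Qed.

Lemma weq_SSA r :
  weq (S [::] ++ sh [:: true] (S [::]) ++ A [::] ++ r)
      (sh [:: true] (A [::]) ++ S [::] ++ sh [:: false] (S [::]) ++ r).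
Proof.
have R : weq (S [::] ++ sh [:: true] (S [::]) ++ A [::])
    (sh [:: true] (A [::]) ++ S [::] ++ sh [:: false] (S [::])).
  exact: weq_rel (R_SSA [::]).
by rewrite 2!catA -[_ ++ A [::]]catA R -!catA; reflexivity.
Qed.

Lemma weq_AS r :
  weq (A [::] ++ S [::] ++ sh [:: true] (winv (A [::])) ++ r)
      (sh [:: true] (S [::]) ++ S [::] ++ sh [:: false] (A [::]) ++ r).
Proof.
have R : weq (A [::] ++ S [::])
    (sh [:: true] (S [::]) ++ S [::] ++ sh [:: true] (A [::]) ++ sh [:: false] (A [::])).
  exact: weq_rel (R_AS [::]).
rewrite catA R -!catA (weq_sh_commr (A [::]) (A [::])) //.
by rewrite weq_sh_winv; reflexivity.
Qed.

(* Words are kept right-associated and ending in [::], so that the lemmas above,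
   which all carry a tail [r], rewrite anywhere in them. *)
Ltac unfold_ops :=
  rewrite /star /circ ?(S_sh [:: false]) ?(A_sh [:: false]);
  rewrite ?(sh_cat, winv_cat, winv_sh, winvK, sh1_sh);
  rewrite -[X in weq X _]cats0 -[X in weq _ X]cats0 -!catA.

Lemma star_morph_star g h k :
  weq (star (star g h) (star g k)) (star g (star h k) ++ S [:: false]).
Proof.
unfold_ops.
rewrite (weq_winv_sh [:: true] g) (weq_sh11_S (winv g)) (weq_winv_sh [:: true; true] g).
rewrite -(weq_sh11_S k) weq_SSS (weq_sh_commr (winv g) (S [::])) //.
rewrite (weq_sh11_S (winv h)) (weq_sh_commr (winv h) (S [::])) //; reflexivity.
Qed.

Lemma star_morph_circ g h k :
  weq (circ (star g h) (star g k)) (star g (circ h k) ++ S [:: false]).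
Proof.
unfold_ops.
rewrite (weq_winv_sh [:: true] g) (weq_sh11_A (winv g)) -(weq_sh11_S k) weq_SSA.
rewrite (weq_sh_commr (winv g) (S [::])) //; reflexivity.
Qed.

Lemma circ_star_assoc g h k :
  weq (star (circ g h) k) (star g (star h k) ++ A [:: false]).
Proof.
unfold_ops.
rewrite -(weq_sh11_A k) weq_AS (weq_sh_commr (winv g) (A [::])) //.
rewrite (weq_sh11_S (winv h)) (weq_sh_commr (winv h) (A [::])) //; reflexivity.
Qed.

Lemma star_sh0l g h k :
  weq (star (g ++ sh [:: false] k) h) (star g h ++ sh [:: false; false] k).
Proof.
unfold_ops.
rewrite (weq_sh_commr k h) // (weq_sh0_S k) (weq_sh_winv [:: true; false] k).
rewrite (weq_sh_commr k (winv g)) //; reflexivity.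
Qed.

Lemma circ_sh0l g h k :
  weq (circ (g ++ sh [:: false] k) h) (circ g h ++ sh [:: false; false] k).
Proof. by unfold_ops; rewrite (weq_sh_commr k h) // (weq_sh0_A k); reflexivity. Qed.

Lemma star_sh0r g h k :
  weq (star g (h ++ sh [:: false] k)) (star g h ++ sh [:: false; true] k).
Proof.
unfold_ops.
by rewrite (weq_sh10_S k) (weq_sh_commr k (winv g)) //; reflexivity.
Qed.

Lemma circ_sh0r g h k :
  weq (circ g (h ++ sh [:: false] k)) (circ g h ++ sh [:: false; true] k).
Proof. by unfold_ops; rewrite (weq_sh10_A k); reflexivity. Qed.

Theorem lemma4p3 :
  forall (box : word -> word -> word), (box = star \/ box = circ) ->
  forall g h k : word,
    weq (box (star g h) (star g k)) (star g (box h k) ++ S [:: false]) /\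
    weq (star (circ g h) k) (star g (star h k) ++ A [:: false]) /\
    weq (box (g ++ sh [:: false] k) h) (box g h ++ sh [:: false; false] k) /\
    weq (box g (h ++ sh [:: false] k)) (box g h ++ sh [:: false; true] k).
Proof.
move=> box [->|->] g h k.
- by do !split; [exact: star_morph_star | exact: circ_star_assoc
                | exact: star_sh0l | exact: star_sh0r].
- by do !split; [exact: star_morph_circ | exact: circ_star_assoc
                | exact: circ_sh0l | exact: circ_sh0r].
Qed.
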